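(* Let $t\in\mathbb{R}$ and $0\le\beta\le1$. Define polynomials $B^*_n(t,\beta;x)$ by $$\sum_{n=0}^\infty B^*_n(t,\beta;x)\frac{z^n}{n!}=\left(\frac{z}{\beta(e^z-1)+(1-\beta)z}\right)^te^{xz}$$ for $z$ in a neighborhood of $0$. Then for every $n\in\mathbb{N}_0$, $$B^*_n(t,\beta;0)=\sum_{m=0}^n\binom{-t}{m}\beta^m\sum_{k=0}^m\binom mk(-1)^{m-k}\frac{S(n+k,k)}{\binom{n+k}{n}}.$$ *)

From Stdlib Require Import Arith Reals Lra.
Open Scope R_scope.

Fixpoint stirling2 (n k : nat) : nat :=
  match n, k with
  | O, O => 1%nat
  | O, S _ => 0%nat
  | S _, O => 0%nat
  | S n', S k' => (S k' * stirling2 n' (S k') + stirling2 n' k')%nat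
  end.

Fixpoint falling (a : R) (m : nat) : R :=
  match m with
  | O => 1
  | S m' => falling a m' * (a - INR m')
  end.

Definition gbinom (a : R) (m : nat) : R := falling a m / INR (fact m).

(* The generating function (z/(beta(e^z-1)+(1-beta)z))^t e^{xz}, for z <> 0
   (where the base is > 0 for real z, 0<=beta<=1). *)
Definition Bstar_gf (t beta x z : R) : R :=
  Rpower (z / (beta * (exp z - 1) + (1 - beta) * z)) t * exp (x * z).

(* b n x are the coefficients B*_n(t,beta;x) of the exponential generating
   function: sum_n b n x z^n/n! = Bstar_gf t beta x z for z in a punctured
   neighbourhood of 0 (the coefficients are thereby uniquely determined). *)
Definition is_Bstar (t beta : R) (b : nat -> R -> R) : Prop :=
  forall x : R, exists delta : R, 0 < delta /\
    forall z : R, 0 < Rabs z < delta ->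
      infinite_sum (fun n => b n x * z ^ n / INR (fact n)) (Bstar_gf t beta x z).

Definition Bstar0_formula (t beta : R) (n : nat) : R :=
  sum_f_R0 (fun m =>
     gbinom (- t) m * beta ^ m *
     sum_f_R0 (fun k =>
        C m k * (-1) ^ (m - k) * INR (stirling2 (n + k) k) / C (n + k) n) m) n.

(* For real z near 0 the base of the power equals 1/(1 + U z) with
   U z = beta ((e^z - 1)/z - 1), and U 0 = 0, so the generating function at
   x = 0 is (1 + U z)^(-t) = sum_m binom(-t, m) beta^m ((e^z - 1)/z - 1)^m.
   Since ((e^z - 1)/z)^k = sum_n k! S(n + k, k) z^n / (n + k)!, expanding the
   m-th power binomially and reading off the coefficient of z^n gives the
   formula, because k! n! / (n + k)! = 1 / binom(n + k, n).  All expansions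
   are carried out with Taylor polynomials and O(z^(N+1)) remainders on a
   punctured neighbourhood of 0, where Taylor coefficients are unique. *)

From Stdlib Require Import Reals FunctionalExtensionality.
From mathcomp Require Import all_boot all_algebra.
From mathcomp Require Import Rstruct lra ring.
Import mathcomp.order.order.Order.TTheory GRing.Theory Num.Theory.
Set Implicit Arguments.
Unset Strict Implicit.
Local Open Scope ring_scope.

Lemma pos_below2 (d1 d2 : R) : 0 < d1 -> 0 < d2 ->
  exists d : R, [/\ 0 < d, d <= d1 & d <= d2].
Proof.
move=> h1 h2; exists (Num.min d1 d2); split.
- by rewrite lt_min h1 h2.
- by rewrite ge_min lexx.
- by rewrite ge_min lexx orbT.
Qed.

Lemma horner_bounded (p : {poly R}) :
  exists M : R, 0 <= M /\ forall z : R, `|z| <= 1 -> `|p.[z]| <= M.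
Proof.
elim/poly_ind: p => [|p c [M [M0 HM]]].
  by exists 0; split => // z _; rewrite horner0 normr0.
exists (M + `|c|); split; first by have := normr_ge0 c; lra.
move=> z hz; rewrite hornerMXaddC.
apply: le_trans (ler_normD _ _) _; rewrite normrM.
have := HM z hz; have := normr_ge0 p.[z]; have := normr_ge0 z; nra.
Qed.

Lemma horner_XnM_bounded (p : {poly R}) k : exists M : R, 0 <= M /\
  forall z : R, `|z| <= 1 -> `|('X^k * p).[z]| <= M * `|z| ^+ k.
Proof.
have [M [M0 HM]] := horner_bounded p; exists M; split => // z hz.
rewrite hornerM hornerXn normrM normrX mulrC.
apply: ler_wpM2r; [exact: exprn_ge0 | exact: HM].
Qed.

Lemma poly_decompX (q : {poly R}) :
  q = 'X * \poly_(i < size q) q`_i.+1 + (q`_0)%:P.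
Proof.
apply/polyP => i; rewrite coefD coefXM coefC coef_poly.
case: i => [|i] //=; first by rewrite add0r.
rewrite addr0; case: ltnP => // hs; rewrite nth_default //.
exact: leq_trans hs (leqnSn _).
Qed.

(** * Polynomial approximation at 0 *)

Definition approx (F : R -> R) (p : {poly R}) (N : nat) : Prop :=
  exists C d : R, [/\ 0 <= C, 0 < d, d <= 1 &
    forall z : R, 0 < `|z| -> `|z| < d -> `|F z - p.[z]| <= C * `|z| ^+ N.+1].

Lemma approx_intro F p N (C d : R) : 0 < d ->
  (forall z : R, 0 < `|z| -> `|z| < d -> `|F z - p.[z]| <= C * `|z| ^+ N.+1) ->
  approx F p N.
Proof.
move=> d0 H.
have [d' [d'0 d'1 d'2]] := @pos_below2 d 1 d0 ltr01.
exists (Num.max C 0), d'; split => //.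
- by rewrite le_max lexx orbT.
move=> z z0 zd; have := H z z0 (lt_le_trans zd d'1).
have hz : 0 <= `|z| ^+ N.+1 by rewrite exprn_ge0.
have hC : C <= Num.max C 0 by rewrite le_max lexx.
nra.
Qed.

Lemma approx_bounded F p N : approx F p N ->
  exists M d : R, [/\ 0 <= M, 0 < d &
    forall z : R, 0 < `|z| -> `|z| < d -> `|F z| <= M].
Proof.
move=> [C [d [C0 d0 d1 H]]].
have [M [M0 HM]] := horner_bounded p.
exists (M + C), d; split => //; first lra.
move=> z z0 zd; have hz1 : `|z| <= 1 by lra.
have := H z z0 zd; have := HM z hz1.
have := exprn_ile1 N.+1 (normr_ge0 z) hz1.
have := ler_normD (F z - p.[z]) p.[z]; rewrite subrK.
have := exprn_ge0 N.+1 (normr_ge0 z).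
nra.
Qed.

Lemma approx_eq_fun F G p N : approx F p N -> F =1 G -> approx G p N.
Proof. by move=> [C [d [? ? ? H]]] E; exists C, d; split => // z ? ?; rewrite -E; apply: H. Qed.

Lemma approx_eq_near F G p N (e : R) : 0 < e -> approx F p N ->
  (forall z, 0 < `|z| -> `|z| < e -> F z = G z) -> approx G p N.
Proof.
move=> e0 [C [d [C0 d0 d1 H]]] E.
have [d' [d'0 h1 h2]] := pos_below2 d0 e0.
apply: (@approx_intro _ _ _ C d' d'0) => z z0 zd.
rewrite -E //; last exact: lt_le_trans zd h2.
exact: H z z0 (lt_le_trans zd h1).
Qed.

Lemma approx_le F p N n : (n <= N)%N -> approx F p N -> approx F p n.
Proof.
move=> hn [C [d [C0 d0 d1 H]]].
apply: (@approx_intro _ _ _ C d d0) => z z0 zd.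
apply: le_trans (H z z0 zd) _; apply: ler_wpM2l => //.
by apply: ler_wiXn2l; rewrite ?normr_ge0 //; lra.
Qed.

Lemma approx_const N (c : R) : approx (fun _ => c) c%:P N.
Proof.
apply: (@approx_intro _ _ _ 0 1 ltr01) => z _ _.
by rewrite hornerC subrr normr0 mul0r.
Qed.

Lemma approx_add F G p q N : approx F p N -> approx G q N ->
  approx (fun z => F z + G z) (p + q) N.
Proof.
move=> [C1 [d1 [C10 d10 d11 H1]]] [C2 [d2 [C20 d20 d21 H2]]].
have [d [d0 hd1 hd2]] := pos_below2 d10 d20.
apply: (@approx_intro _ _ _ (C1 + C2) d d0) => z z0 zd.
rewrite hornerD.
have -> : F z + G z - (p.[z] + q.[z]) = (F z - p.[z]) + (G z - q.[z]) by ring.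
apply: le_trans (ler_normD _ _) _; rewrite mulrDl.
apply: lerD; [exact: H1 z z0 (lt_le_trans zd hd1) | exact: H2 z z0 (lt_le_trans zd hd2)].
Qed.

Lemma approx_mul F G p q N : approx F p N -> approx G q N ->
  approx (fun z => F z * G z) (p * q) N.
Proof.
move=> HF HG; have [MG [dG [MG0 dG0 HMG]]] := approx_bounded HG.
case: HF => [C1 [d1 [C10 d10 d11 H1]]]; case: HG => [C2 [d2 [C20 d20 d21 H2]]].
have [Mp [Mp0 HMp]] := horner_bounded p.
have [d [d0 hd1 hd2]] := pos_below2 d10 d20.
have [d' [d'0 hd' hdG]] := pos_below2 d0 dG0.
apply: (@approx_intro _ _ _ (C1 * MG + Mp * C2) d' d'0) => z z0 zd.
rewrite hornerM.
have -> : F z * G z - p.[z] * q.[z] = (F z - p.[z]) * G z + p.[z] * (G z - q.[z]).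
  by ring.
apply: le_trans (ler_normD _ _) _; rewrite !normrM.
have e1 := H1 z z0 (lt_le_trans zd (le_trans hd' hd1)).
have e2 := H2 z z0 (lt_le_trans zd (le_trans hd' hd2)).
have e3 := HMG z z0 (lt_le_trans zd hdG).
have e4 := HMp z (ltW (lt_le_trans zd (le_trans hd' (le_trans hd1 d11)))).
have t1 := ler_pM (normr_ge0 _) (normr_ge0 _) e1 e3.
have t2 := ler_pM (normr_ge0 _) (normr_ge0 _) e4 e2.
apply: le_trans (lerD t1 t2) _.
by rewrite mulrDl -mulrA (mulrC _ MG) mulrA mulrA.
Qed.

Lemma approx_horner_comp (T : {poly R}) U q N : approx U q N ->
  approx (fun z => T.[U z]) (T \Po q) N.
Proof.
move=> HU; elim/poly_ind: T => [|T c IH].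
  rewrite comp_poly0; apply: approx_eq_fun (approx_const N 0) _ => z.
  by rewrite horner0.
rewrite comp_polyD comp_polyM comp_polyX comp_polyC.
apply: approx_eq_fun (approx_add (approx_mul IH HU) (approx_const N c)) _ => z.
by rewrite hornerMXaddC.
Qed.

Lemma approx_bigO_z U q N : approx U q N -> q`_0 = 0 ->
  exists L rho : R, [/\ 0 <= L, 0 < rho &
    forall z, 0 < `|z| -> `|z| < rho -> `|U z| <= L * `|z|].
Proof.
move=> [C [d [C0 d0 d1 H]]] q0.
set r := \poly_(i < size q) q`_i.+1.
have Eq : q = 'X^1 * r by rewrite {1}(poly_decompX q) q0 addr0 expr1.
have [M [M0 HM]] := horner_XnM_bounded r 1.
exists (C + M), d; split => //; first lra.
move=> z z0 zd; have hz1 : `|z| <= 1 by lra.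
have e1 := H z z0 zd; have e2 := HM z hz1.
rewrite -Eq expr1 in e2.
have hw : `|z| ^+ N.+1 <= `|z| ^+ 1.
  by apply: ler_wiXn2l => //; rewrite ?normr_ge0.
rewrite expr1 in hw.
have := ler_normD (U z - q.[z]) q.[z]; rewrite subrK => e3.
have : C * `|z| ^+ N.+1 <= C * `|z| by apply: ler_wpM2l.
lra.
Qed.

Lemma approx_comp_taylor (H : R -> R) (T : {poly R}) (r K : R) U q N :
  0 < r -> 0 <= K ->
  (forall u, `|u| < r -> `|H u - T.[u]| <= K * `|u| ^+ N.+1) ->
  approx U q N -> q`_0 = 0 -> approx (fun z => H (U z)) (T \Po q) N.
Proof.
move=> r0 K0 HT HU q0.
have [L [rho [L0 rho0 HL]]] := approx_bigO_z HU q0.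
have [C [d [C0 d0 d1 HC]]] := approx_horner_comp T HU.
have [e [e0 he1 he2]] := pos_below2 d0 rho0.
have Lr : 0 < r / (L + 1) by apply: divr_gt0 => //; lra.
have [e' [e'0 he'1 he'2]] := pos_below2 e0 Lr.
apply: (@approx_intro _ _ _ (K * L ^+ N.+1 + C) e' e'0) => z z0 zd.
have zd1 : `|z| < d by apply: lt_le_trans zd (le_trans he'1 he1).
have hU := HL z z0 (lt_le_trans zd (le_trans he'1 he2)).
have zL : `|z| * (L + 1) < r.
  by rewrite -ltr_pdivlMr; [exact: lt_le_trans zd he'2 | lra].
have Ur : `|U z| < r by have := normr_ge0 z; nra.
have e1 := HT (U z) Ur.
have e2 := HC z z0 zd1.
rewrite horner_comp; rewrite horner_comp in e2.
have -> : H (U z) - T.[q.[z]] = (H (U z) - T.[U z]) + (T.[U z] - T.[q.[z]]).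
  by ring.
apply: le_trans (ler_normD _ _) _.
have hp : `|U z| ^+ N.+1 <= (L * `|z|) ^+ N.+1.
  apply: lerXn2r => //; rewrite nnegrE ?normr_ge0 //.
  by apply: mulr_ge0 => //; apply: normr_ge0.
rewrite exprMn in hp.
have : K * `|U z| ^+ N.+1 <= K * (L ^+ N.+1 * `|z| ^+ N.+1) by apply: ler_wpM2l.
rewrite mulrDl -mulrA; lra.
Qed.

Lemma eq0_of_bigO_z (a K e : R) : 0 < e ->
  (forall z : R, 0 < `|z| -> `|z| < e -> `|a| <= K * `|z|) -> a = 0.
Proof.
move=> e0 H; apply/eqP/negPn/negP => a0.
have ha : 0 < `|a| by rewrite normr_gt0.
have K'0 : 0 < 2 * (`|K| + 1) by have := normr_ge0 K; lra.
have e2 : 0 < e / 2 by lra.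
have [z [z0 z1 z2]] := pos_below2 e2 (divr_gt0 ha K'0).
have nz : `|z| = z by rewrite ger0_norm // ltW.
have := H z; rewrite nz => /(_ z0 ltac:(lra)) hz.
move: z2; rewrite ler_pdivlMr // => hz2.
have : K * z <= `|K| * z by apply: ler_wpM2r; [exact: ltW | exact: ler_norm].
nra.
Qed.

Lemma coef0_eq0_of_bigO N (d : {poly R}) (C e : R) : 0 < e ->
  (forall z : R, 0 < `|z| -> `|z| < e -> `|d.[z]| <= C * `|z| ^+ N.+1) ->
  d`_0 = 0.
Proof.
move=> e0 H.
set r := \poly_(i < size d) d`_i.+1.
have Ed := poly_decompX d; rewrite -/r in Ed.
have [M [M0 HM]] := horner_XnM_bounded r 1.
have [e' [e'0 he1 he2]] := pos_below2 e0 ltr01.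
apply: (@eq0_of_bigO_z _ (`|C| + M) e' e'0) => z z0 zd.
have hz1 : `|z| <= 1 by lra.
have e1 := H z z0 (lt_le_trans zd he1).
have e2 := HM z hz1; rewrite expr1 in e2.
have hw : `|z| ^+ N.+1 <= `|z|.
  by rewrite -{2}(expr1 `|z|); apply: ler_wiXn2l; rewrite ?normr_ge0.
have hw0 := exprn_ge0 N.+1 (normr_ge0 z).
have e3 : C * `|z| ^+ N.+1 <= `|C| * `|z|.
  apply: le_trans (_ : `|C| * `|z| ^+ N.+1 <= _).
    by apply: ler_wpM2r => //; exact: ler_norm.
  by apply: ler_wpM2l => //; exact: normr_ge0.
have -> : d`_0 = d.[z] - ('X^1 * r).[z].
  by rewrite {2}Ed hornerD hornerC expr1; ring.
apply: le_trans (ler_normD _ _) _; rewrite normrN mulrDl; lra.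
Qed.

Lemma coef_eq0_of_bigO N (d : {poly R}) (C e : R) : 0 < e ->
  (forall z : R, 0 < `|z| -> `|z| < e -> `|d.[z]| <= C * `|z| ^+ N.+1) ->
  forall i, (i <= N)%N -> d`_i = 0.
Proof.
elim: N d C => [|N IH] d C e0 H i hi.
  by rewrite leqn0 in hi; move/eqP: hi => ->; exact: coef0_eq0_of_bigO e0 H.
case: i hi => [|i] hi; first exact: coef0_eq0_of_bigO e0 H.
set r := \poly_(i < size d) d`_i.+1.
have Ed := poly_decompX d; rewrite -/r (coef0_eq0_of_bigO e0 H) addr0 in Ed.
have -> : d`_i.+1 = r`_i by rewrite {1}Ed coefXM.
apply: (IH r C e0) => // z z0 zd.
have := H z z0 zd; rewrite {1}Ed hornerM hornerX normrM exprS.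
by rewrite mulrCA ler_pM2l.
Qed.

Lemma approx_unique F (p q : {poly R}) N : approx F p N -> approx F q N ->
  forall i, (i <= N)%N -> p`_i = q`_i.
Proof.
move=> [C1 [d1 [C10 d10 d11 H1]]] [C2 [d2 [C20 d20 d21 H2]]] i hi.
have [d [d0 hd1 hd2]] := pos_below2 d10 d20.
apply/eqP; rewrite -subr_eq0 -coefB; apply/eqP.
apply: (@coef_eq0_of_bigO N (p - q) (C1 + C2) d d0) => // z z0 zd.
have e1 := H1 z z0 (lt_le_trans zd hd1).
have e2 := H2 z z0 (lt_le_trans zd hd2).
rewrite hornerD hornerN.
have -> : p.[z] - q.[z] = (F z - q.[z]) - (F z - p.[z]) by ring.
apply: le_trans (ler_normD _ _) _; rewrite normrN mulrDl; lra.
Qed.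

(** * Taylor bounds from derivative bounds *)

Lemma derivable_pt_lim_horner (p : {poly R}) x :
  derivable_pt_lim (fun y => p.[y]) x (p^`()).[x].
Proof.
elim/poly_ind: p => [|p c IH].
  apply: derivable_pt_lim_ext (fun y => esym (horner0 y)) _.
  rewrite deriv0 horner0; exact: derivable_pt_lim_const.
apply: derivable_pt_lim_ext (fun y => esym (hornerMXaddC p c y)) _.
have H := derivable_pt_lim_plus _ _ x _ _
  (derivable_pt_lim_mult _ _ x _ _ IH (derivable_pt_lim_id x))
  (derivable_pt_lim_const c x).
suff -> : (p * 'X + c%:P)^`().[x] = ((p^`()).[x] * id x + p.[x] * 1 + 0)%R by [].
rewrite derivMXaddC hornerD hornerM hornerX /id /Ranalysis1.id.
by rewrite ?RplusE ?RmultE ?R1E ?R0E; ring.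
Qed.

Lemma mvt_interval (g g' : R -> R) (r a b : R) : a < b -> `|a| < r -> `|b| < r ->
  (forall s, `|s| < r -> derivable_pt_lim g s (g' s)) ->
  exists2 c, g b - g a = g' c * (b - a) & a < c < b.
Proof.
move=> ab ar br gd.
have hc : forall c, Rle a c /\ Rle c b -> derivable_pt_lim g c (g' c).
  move=> c [/RleP ac /RleP cb]; apply: gd.
  case: (lerP 0 c) => c0.
    by rewrite ger0_norm //; apply: le_lt_trans cb (le_lt_trans (ler_norm b) br).
  rewrite ltr0_norm //; apply: le_lt_trans _ ar.
  by rewrite -normrN; apply: le_trans (ler_norm _); rewrite lerN2.
have [c [Hc [/RltP ac /RltP cb]]] := MVT_cor2 g g' a b (elimT RltP ab) hc.
by exists c; rewrite ?ac ?cb.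
Qed.

Lemma taylor_bound_step (f f' : R -> R) (p : {poly R}) (r C : R) N :
  0 < r -> 0 <= C -> (forall s, `|s| < r -> derivable_pt_lim f s (f' s)) ->
  f 0 = p.[0] ->
  (forall s, `|s| < r -> `|f' s - (p^`()).[s]| <= C * `|s| ^+ N) ->
  forall u, `|u| < r -> `|f u - p.[u]| <= C * `|u| ^+ N.+1.
Proof.
move=> r0 C0 Hd H0 Hb u ur.
pose g y := f y - p.[y].
pose g' y := f' y - (p^`()).[y].
have gd s : `|s| < r -> derivable_pt_lim g s (g' s).
  move=> sr; apply: derivable_pt_lim_ext
    (derivable_pt_lim_minus _ _ _ _ _ (Hd s sr) (derivable_pt_lim_horner p s)).
  by move=> y; rewrite /g /minus_fct.
have g0 : g 0 = 0 by rewrite /g H0 subrr.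
have gb c : `|c| <= `|u| -> `|g' c| <= C * `|u| ^+ N.
  move=> cu; apply: le_trans (Hb c (le_lt_trans cu ur)) _.
  apply: ler_wpM2l => //; apply: lerXn2r => //; rewrite nnegrE normr_ge0 //.
have r0' : `|0 : R| < r by rewrite normr0.
rewrite -/(g u) exprSr mulrA.
case: (ltgtP 0 u) => [up|un|<-]; last by rewrite g0 !normr0 mulr0.
- have [c Hc /andP[c0 cu]] := mvt_interval up r0' ur gd.
  move: Hc; rewrite g0 !subr0 => ->.
  rewrite normrM (ger0_norm (ltW up)); apply: ler_wpM2r; first exact: ltW.
  have := gb c; rewrite (ger0_norm (ltW up)) (ger0_norm (ltW c0)).
  by apply; exact: ltW.
- have [c Hc /andP[uc c0]] := mvt_interval un ur r0' gd.
  move: Hc; rewrite g0 sub0r => /eqP; rewrite eqr_oppLR => /eqP ->.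
  rewrite normrN normrM sub0r normrN; apply: ler_wpM2r; first exact: normr_ge0.
  by apply: gb; rewrite (ltr0_norm un) (ltr0_norm c0) lerN2; exact: ltW.
Qed.

(** * The exponential and the binomial series *)

Lemma exp_le_exp (x y : R) : x <= y -> exp x <= exp y.
Proof.
rewrite le_eqVlt => /orP[/eqP -> //| /RltP h].
by apply/RleP; apply: Rlt_le; apply: exp_increasing.
Qed.

Lemma exp_gt0 (x : R) : 0 < exp x.
Proof. by apply/RltP; apply: exp_pos. Qed.

Lemma natr_fact_neq0 (n : nat) : (n`!%:R : R) != 0.
Proof. by rewrite pnatr_eq0 -lt0n fact_gt0. Qed.

Definition exp_poly (M : nat) : {poly R} := \poly_(j < M.+1) (j`!%:R)^-1.

Lemma exp_poly_deriv M : (exp_poly M.+1)^`() = exp_poly M.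
Proof.
apply/polyP => i; rewrite coef_deriv !coef_poly ltnS.
case: ltnP => _; last by rewrite mul0rn.
rewrite factS natrM invfM -[_ *+ _]mulr_natr mulrAC mulVf ?mul1r //.
by rewrite pnatr_eq0.
Qed.

Lemma exp_poly0_deriv : (exp_poly 0)^`() = 0.
Proof. by apply/polyP => i; rewrite coef_deriv coef_poly coef0 mul0rn. Qed.

Lemma exp_poly_at0 M : (exp_poly M).[0] = 1.
Proof. by rewrite horner_coef0 coef_poly /= invr1. Qed.

Lemma exp_taylor M (u : R) : `|u| < 1 ->
  `|exp u - (exp_poly M).[u]| <= 3 * `|u| ^+ M.+1.
Proof.
have hd s : `|s| < 1 -> derivable_pt_lim exp s (exp s).
  by move=> _; apply: derivable_pt_lim_exp.
have h0 K : exp 0 = (exp_poly K).[0] by rewrite exp_poly_at0 expR0.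
elim: M u => [|M IH] u hu; apply: (taylor_bound_step ltr01 _ hd (h0 _)) => //.
  move=> s hs; rewrite exp_poly0_deriv horner0 subr0 expr0 mulr1.
  rewrite ger0_norm; last exact: ltW (exp_gt0 s).
  apply: le_trans (exp_le_exp (_ : s <= 1)) _.
    by apply: le_trans (ler_norm s) (ltW hs).
  by apply/RleP; exact: exp_le_3.
by move=> s hs; rewrite exp_poly_deriv; apply: IH.
Qed.

Lemma falling_S (a : R) m : falling a m.+1 = a * falling (a - 1) m.
Proof.
elim: m a => [|m IH] a.
  by rewrite /= ?RmultE ?RminusE ?INRE ?R1E ?R0E; ring.
change (falling a m.+1 * (a - INR m.+1) =
        a * (falling (a - 1) m * ((a - 1) - INR m))).
by rewrite IH ?INRE -addn1 natrD; ring.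
Qed.

Definition binom_poly (a : R) (N : nat) : {poly R} :=
  \poly_(m < N.+1) (falling a m / (m`!)%:R).

Lemma binom_poly_deriv a N : (binom_poly a N.+1)^`() = a *: binom_poly (a - 1) N.
Proof.
apply/polyP => i; rewrite coef_deriv coefZ !coef_poly ltnS.
case: ltnP => _; last by rewrite mul0rn mulr0.
rewrite falling_S factS natrM -mulr_natr.
by field; rewrite natr_fact_neq0 addrC natr1 pnatr_eq0.
Qed.

Lemma binom_poly0_deriv a : (binom_poly a 0)^`() = 0.
Proof. by apply/polyP => i; rewrite coef_deriv coef_poly coef0 mul0rn. Qed.

Lemma binom_poly_at0 a N : (binom_poly a N).[0] = 1.
Proof. by rewrite horner_coef0 coef_poly /= R1E divr1. Qed.

Lemma add1r_gt0 (s : R) : `|s| < 1/2 -> 0 < 1 + s.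
Proof. move=> h; have := ler_norm (- s); rewrite normrN; lra. Qed.

Lemma derivable_pt_lim_Rpower_add1 (a s : R) : `|s| < 1/2 ->
  derivable_pt_lim (fun u => Rpower (1 + u) a) s (a * Rpower (1 + s) (a - 1)).
Proof.
move=> hs.
have d1 : derivable_pt_lim (fun u => 1 + u) s 1.
  have := derivable_pt_lim_plus _ _ s _ _
    (derivable_pt_lim_const 1 s) (derivable_pt_lim_id s).
  by rewrite RplusE R0E add0r.
have := derivable_pt_lim_comp _ _ s _ _ d1
  (derivable_pt_lim_power (1 + s) a (elimT RltP (add1r_gt0 hs))).
by rewrite R1E RmultE mulr1.
Qed.

Lemma Rpower_base1 (a : R) : Rpower 1 a = 1.
Proof. by rewrite /Rpower ln_1 RmultE R0E mulr0 expR0. Qed.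

Lemma ln_add1_bounded (s : R) : `|s| < 1/2 -> `|ln (1 + s)| <= 1.
Proof.
move=> hs; have pos := add1r_gt0 hs.
have two0 : 0 < 1 + 1 :> R by rewrite addr_gt0 ?ltr01.
have l2 : ln (1 + 1) < 1.
  have e2 : 1 + 1 < exp 1.
    by have := exp_ineq1 1 R1_neq_R0; rewrite R1E => /RltP; rewrite RplusE.
  have /RltP := ln_increasing _ _ (elimT RltP two0) (elimT RltP e2).
  by rewrite ln_exp.
have hn := ler_norm s; have hn' := ler_norm (- s); rewrite normrN in hn'.
have up : ln (1 + s) < ln (1 + 1).
  by apply/RltP; apply: ln_increasing; apply/RltP; rewrite ?RplusE ?R1E ?R0E; lra.
have lo : ln ((1 + 1)^-1) < ln (1 + s).
  apply/RltP; apply: ln_increasing; apply/RltP; rewrite ?RplusE ?R1E ?RinvE.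
    by rewrite invr_gt0.
  by rewrite (_ : (1 + 1)^-1 = 1/2 :> R) ?div1r //; lra.
rewrite -RinvE ln_Rinv ?RoppE in lo; last exact/RltP.
by rewrite ler_norml; apply/andP; split; lra.
Qed.

Lemma Rpower_add1_bounded (s b : R) : `|s| < 1/2 -> Rpower (1 + s) b <= exp `|b|.
Proof.
move=> hs; rewrite /Rpower; apply: exp_le_exp.
have := ln_add1_bounded hs; rewrite RmultE => h.
apply: le_trans (ler_norm _) _; rewrite normrM.
have := normr_ge0 b; have := normr_ge0 (ln (1 + s)); nra.
Qed.

Lemma Rpower_add1_taylor N (a : R) : exists K : R, 0 <= K /\
  forall u : R, `|u| < 1/2 ->
    `|Rpower (1 + u) a - (binom_poly a N).[u]| <= K * `|u| ^+ N.+1.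
Proof.
have r0 : 0 < 1/2 :> R by lra.
have h0 b M : Rpower (1 + 0) b = (binom_poly b M).[0].
  by rewrite binom_poly_at0 RplusE R0E addr0 Rpower_base1.
have hd b s (hs : `|s| < 1/2) := derivable_pt_lim_Rpower_add1 b hs.
elim: N a => [|N IH] a.
  have K0 : 0 <= `|a| * exp `|a - 1|.
    by apply: mulr_ge0; [exact: normr_ge0 | exact: ltW (exp_gt0 _)].
  exists (`|a| * exp `|a - 1|); split => //.
  apply: (taylor_bound_step r0 K0 (hd a) (h0 a 0%N)) => s hs.
  rewrite binom_poly0_deriv horner0 subr0 expr0 mulr1 normrM.
  apply: ler_wpM2l; first exact: normr_ge0.
  rewrite ger0_norm; last exact: ltW (exp_gt0 _).
  exact: Rpower_add1_bounded.
have [K [K0 HK]] := IH (a - 1).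
have aK0 : 0 <= `|a| * K by apply: mulr_ge0 => //; exact: normr_ge0.
exists (`|a| * K); split => //.
apply: (taylor_bound_step r0 aK0 (hd a) (h0 a N.+1)) => s hs.
rewrite binom_poly_deriv hornerZ -mulrBr normrM -mulrA.
by apply: ler_wpM2l; [exact: normr_ge0 | exact: HK].
Qed.

(** * Power series on a punctured neighbourhood *)

Lemma infinite_sum_eq (f g : nat -> R) l : f =1 g ->
  infinite_sum f l -> infinite_sum g l.
Proof. by move=> /functional_extensionality ->. Qed.

Lemma infinite_sumP (s : nat -> R) l : infinite_sum s l ->
  forall eps : R, 0 < eps -> exists N,
    forall n, (N <= n)%N -> `|\sum_(k < n.+1) s k - l| < eps.
Proof.
move=> H eps /RltP he; have [N HN] := H eps he; exists N => n hn.
by have := HN n (elimT ssrnat.leP hn); rewrite RdistE sum_f_R0E big_mkord => /RltP.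
Qed.

Lemma infinite_sum_dist_le (s : nat -> R) l c B N : infinite_sum s l ->
  (forall n, (N <= n)%N -> `|\sum_(k < n.+1) s k - c| <= B) -> `|l - c| <= B.
Proof.
move=> /infinite_sumP H HB; case: (lerP `|l - c| B) => // hlt.
have [N1 HN1] := H (`|l - c| - B) ltac:(lra).
set S := \sum_(k < (maxn N N1).+1) s k.
have h1 := HN1 (maxn N N1) (leq_maxr _ _).
have h2 := HB (maxn N N1) (leq_maxl _ _).
have := ler_normD (l - S) (S - c); rewrite distrC in h1.
have -> : l - S + (S - c) = l - c by ring.
lra.
Qed.

Lemma infinite_sum_bounded_terms (s : nat -> R) l : infinite_sum s l ->
  exists M : R, 0 <= M /\ forall k, `|s k| <= M.
Proof.
move=> /infinite_sumP H.
have [N0 HN] := H 1 ltr01.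
have sum0 : 0 <= \sum_(j < N0.+1) `|s j|.
  by apply: sumr_ge0 => j _; exact: normr_ge0.
exists (2 + \sum_(j < N0.+1) `|s j|); split; first lra.
move=> k; case: (ltnP k N0.+1) => hk.
  have : `|s k| <= \sum_(j < N0.+1) `|s j|.
    rewrite (bigD1 (Ordinal hk)) //= -[X in X <= _]addr0 lerD2l.
    by apply: sumr_ge0 => j _; exact: normr_ge0.
  lra.
case: k hk => [//|k] hk.
have h1 := HN k.+1 (ltnW hk).
have h2 := HN k hk.
have -> : s k.+1 = (\sum_(j < k.+2) s j - l) - (\sum_(j < k.+1) s j - l).
  by rewrite big_ord_recr /=; ring.
have := ler_normD (\sum_(j < k.+2) s j - l) (- (\sum_(j < k.+1) s j - l)).
rewrite normrN; lra.
Qed.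

Lemma geometric_tail_bound (s : nat -> R) (M rho : R) N j :
  0 <= M -> 0 <= rho -> 2 * rho <= 1 -> (forall k, `|s k| <= M * rho ^+ k) ->
  `|\sum_(k < (N + j).+1) s k - \sum_(k < N.+1) s k| <= 2 * M * rho ^+ N.+1.
Proof.
move=> M0 rho0 rho1 hs.
suff : `|\sum_(k < (N + j).+1) s k - \sum_(k < N.+1) s k|
         <= 2 * M * rho ^+ N.+1 - 2 * M * rho ^+ (N + j).+1.
  by have := mulr_ge0 M0 (exprn_ge0 (N + j).+1 rho0); lra.
elim: j => [|j IH]; first by rewrite addn0 subrr normr0; lra.
rewrite addnS big_ord_recr /=.
have -> : \sum_(k < (N + j).+1) s k + s (N + j).+1 - \sum_(k < N.+1) s k
  = (\sum_(k < (N + j).+1) s k - \sum_(k < N.+1) s k) + s (N + j).+1 by ring.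
have hb := hs (N + j).+1.
have w0 := exprn_ge0 (N + j).+1 rho0.
rewrite (exprS rho (N + j).+1).
apply: le_trans (ler_normD _ _) _.
have : M * rho ^+ (N + j).+1 * (2 * rho) <= M * rho ^+ (N + j).+1 * 1.
  by apply: ler_wpM2l => //; exact: mulr_ge0.
lra.
Qed.

(* A power series converging on a punctured neighbourhood of 0 is
   approximated by its partial sums: the terms are bounded at one point z0,
   and for |z| <= z0/2 the tail is dominated by a geometric series. *)
Lemma series_approx (a : nat -> R) (F : R -> R) (e : R) N : 0 < e ->
  (forall z, 0 < `|z| -> `|z| < e -> infinite_sum (fun k => a k * z ^+ k) (F z)) ->
  approx F (\poly_(k < N.+1) a k) N.
Proof.
move=> e0 H.
have [z0 [z00 z0e]] : exists z0 : R, 0 < z0 /\ z0 < e by exists (e / 2); split; lra.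
have nz0 : `|z0| = z0 by rewrite ger0_norm // ltW.
have [M [M0 HM]] := infinite_sum_bounded_terms
  (H z0 ltac:(by rewrite nz0) ltac:(by rewrite nz0)).
have d0 : 0 < z0 / 2 by lra.
apply: (@approx_intro _ _ _ (2 * M / z0 ^+ N.+1) _ d0) => z zp zd.
pose rho := `|z| / z0.
have rho0 : 0 <= rho by apply: divr_ge0; [exact: normr_ge0 | exact: ltW].
have rho1 : 2 * rho <= 1 by rewrite /rho mulrA ler_pdivrMr // mul1r; lra.
have tb k : `|a k * z ^+ k| <= M * rho ^+ k.
  have nz : z0 ^+ k != 0 by rewrite expf_neq0 // gt_eqF.
  have -> : a k * z ^+ k = (a k * z0 ^+ k) * (z / z0) ^+ k.
    by rewrite exprMn exprVn [z ^+ k * _]mulrC mulrA -(mulrA (a k)) mulfV ?mulr1.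
  rewrite normrM normrX normf_div nz0 -/rho.
  by apply: ler_wpM2r => //; exact: exprn_ge0.
have H1 : `|F z - \sum_(k < N.+1) a k * z ^+ k| <= 2 * M * rho ^+ N.+1.
  apply: (@infinite_sum_dist_le _ _ _ _ N (H z zp ltac:(lra))).
  move=> n hn; rewrite -(subnKC hn).
  exact: geometric_tail_bound M0 rho0 rho1 tb.
rewrite horner_poly; apply: le_trans H1 _.
have -> : rho ^+ N.+1 = `|z| ^+ N.+1 / z0 ^+ N.+1 by rewrite /rho exprMn exprVn.
by rewrite mulrA mulrAC.
Qed.

(** * Stirling numbers and powers of (e^z - 1) *)

Lemma coef_exp_poly_sub1_pow M j k : (j <= M.+1)%N ->
  ((exp_poly M.+1 - 1) ^+ k)`_j = k`!%:R * (stirling2 j k)%:R / j`!%:R.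
Proof.
set D := exp_poly M.+1 - 1.
have D0 : D`_0 = 0 by rewrite /D coefB coef1 coef_poly /= invr1 subrr.
(* D' = D + 1 up to degree M, whence the Stirling recurrence. *)
have rec i l : (i <= M)%N ->
    (D ^+ l.+1)`_i.+1 *+ i.+1 = ((D ^+ l.+1)`_i + (D ^+ l)`_i) *+ l.+1.
  move=> hi; rewrite -coef_deriv deriv_exp /= coefMn; congr (_ *+ _).
  have -> : D^`() = exp_poly M by rewrite /D derivB exp_poly_deriv derivC subr0.
  have -> : (D ^+ l.+1)`_i + (D ^+ l)`_i = ((D + 1) * D ^+ l)`_i.
    by rewrite mulrDl mul1r -exprS coefD.
  rewrite !coefM; apply: eq_bigr => [[u hu]] _ /=.
  congr (_ * _); rewrite /D coefD coefB !coef_poly.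
  have -> : (u < M.+1)%N by apply: leq_trans hu _; rewrite ltnS.
  have -> : (u < M.+2)%N by apply: leq_trans hu _; rewrite ltnS ltnW.
  by rewrite subrK.
elim: j k => [|j IH] k hj.
  case: k => [|k]; first by rewrite expr0 coef1 /= mulr1 divr1.
  by rewrite exprS coef0M D0 mul0r /= mulr0 mul0r.
case: k => [|k]; first by rewrite expr0 coef1 /= mulr0 mul0r.
have := rec j k ltac:(by rewrite -ltnS).
rewrite !IH ?(leq_trans (leqnSn _) hj) // => E.
have jn0 : j.+1%:R != 0 :> R by rewrite pnatr_eq0.
apply: (mulIf jn0); rewrite [LHS]mulr_natr E.
have -> : stirling2 j.+1 k.+1 = (k.+1 * stirling2 j k.+1 + stirling2 j k)%N by [].
rewrite -[LHS]mulr_natr natrD natrM !factS !natrM.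
by field; rewrite natr_fact_neq0 addrC natr1 pnatr_eq0.
Qed.

Definition exprel_poly (L : nat) : {poly R} := \poly_(j < L.+1) ((j.+1)`!%:R)^-1.

Lemma mulX_exprel_poly L : 'X * exprel_poly L = exp_poly L.+1 - 1.
Proof.
apply/polyP => i; rewrite coefXM coefB coef1 !coef_poly.
case: i => [|i] /=; first by rewrite invr1 subrr.
by rewrite subr0 ltnS.
Qed.

Lemma coef_exprel_poly_pow L n i : (n + i <= L.+1)%N ->
  (exprel_poly L ^+ i)`_n = i`!%:R * (stirling2 (n + i) i)%:R / (n + i)`!%:R.
Proof.
move=> h; rewrite -(@coef_exp_poly_sub1_pow L) // -mulX_exprel_poly.
by rewrite exprMn_comm ?coefXnM ?ltnNge ?leq_addl //= ?addnK //; exact: mulrC.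
Qed.

Lemma approx_exprel L : approx (fun z => (exp z - 1) / z) (exprel_poly L) L.
Proof.
apply: (@approx_intro _ _ _ 3 1 ltr01) => z z0 z1.
have := exp_taylor L.+1 z1.
have -> : (exp_poly L.+1).[z] = z * (exprel_poly L).[z] + 1.
  by rewrite -(subrK 1 (exp_poly L.+1)) -mulX_exprel_poly hornerD hornerM hornerX hornerC.
have zn0 : z != 0 by rewrite -normr_gt0.
have -> : (exp z - 1) / z - (exprel_poly L).[z]
        = (exp z - (z * (exprel_poly L).[z] + 1)) / z by field.
by rewrite normf_div ler_pdivrMr // -mulrA -exprSr.
Qed.

Lemma coef_binom_poly_comp (a beta : R) (n L : nat) : (n + n <= L.+1)%N ->
  (binom_poly a n \Po (beta *: (exprel_poly L - 1)))`_n =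
  \sum_(m < n.+1) (falling a m / m`!%:R) * (beta ^+ m *
     \sum_(i < m.+1) ((-1) ^+ (m - i) *
       (i`!%:R * (stirling2 (n + i) i)%:R / (n + i)`!%:R)) *+ 'C(m, i)).
Proof.
move=> hL; rewrite /binom_poly poly_def raddf_sum coef_sum.
apply: eq_bigr => [[m hm]] _ /=.
rewrite comp_polyZ comp_Xn_poly coefZ exprZn coefZ addrC exprDn coef_sum.
congr (_ * (_ * _)); apply: eq_bigr => [[i hi]] _ /=.
rewrite coefMn -(rmorph_sign polyC) coefCM coef_exprel_poly_pow //.
by apply: leq_trans hL; rewrite leq_add2l -ltnS (leq_trans hi).
Qed.

Lemma C_natrE m i : (i <= m)%N -> Binomial.C m i = 'C(m, i)%:R.
Proof.
move=> h; rewrite /Binomial.C !INRE !factE -(bin_fact h) !natrM RdivE RmultE.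
by field; rewrite !natr_fact_neq0.
Qed.

Lemma Bstar0_formulaE (t beta : R) n : Bstar0_formula t beta n =
  n`!%:R * \sum_(m < n.+1) (falling (- t) m / m`!%:R) * (beta ^+ m *
     \sum_(i < m.+1) ((-1) ^+ (m - i) *
       (i`!%:R * (stirling2 (n + i) i)%:R / (n + i)`!%:R)) *+ 'C(m, i)).
Proof.
rewrite /Bstar0_formula sum_f_R0E big_mkord mulr_sumr.
apply: eq_bigr => [[m hm]] _ /=.
rewrite sum_f_R0E big_mkord /gbinom RpowE INRE factE !RmultE RdivE RoppE.
rewrite !mulr_sumr; apply: eq_bigr => [[i hi]] _ /=.
have him : (i <= m)%N by rewrite -ltnS.
rewrite RdivE !RmultE RpowE INRE C_natrE // C_natrE ?leq_addr //.
(* k! n! / (n + k)! = 1 / binom(n + k, n) *)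
have hb := bin_fact (leq_addr i n); rewrite addKn in hb.
have <- : 'C(n + i, n)%:R * (n`!%:R * i`!%:R) = (n + i)`!%:R :> R.
  by rewrite -!natrM hb.
have cn0 : 'C(n + i, n)%:R != 0 :> R by rewrite pnatr_eq0 -lt0n bin_gt0 leq_addr.
by rewrite -mulr_natr; field; rewrite !natr_fact_neq0 cn0.
Qed.

(** * The generating function of B*_n(t, beta; 0) *)

Lemma approx_is_Bstar (t beta : R) (b : nat -> R -> R) n : is_Bstar t beta b ->
  approx (Bstar_gf t beta 0) (\poly_(k < n.+1) (b k 0 / k`!%:R)) n.
Proof.
move=> hb; have [e [/RltP e0 He]] := hb 0.
rewrite R0E in e0.
apply: (@series_approx _ _ e) => // z z0 ze.
have hz : Rlt 0 (Rabs z) /\ Rlt (Rabs z) e by rewrite RabsE; split; apply/RltP.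
apply: infinite_sum_eq (He z hz) => k /=.
by rewrite RdivE RmultE RpowE INRE factE mulrAC.
Qed.

Lemma Bstar_gf0E (t beta z : R) : z != 0 ->
  let U := beta * ((exp z - 1) / z - 1) in 0 < 1 + U ->
  Bstar_gf t beta 0 z = Rpower (1 + U) (- t).
Proof.
move=> zn0 U Upos.
rewrite /Bstar_gf ?RmultE ?RplusE ?RminusE ?RdivE ?R1E ?R0E mul0r expR0 mulr1.
have -> : beta * (exp z - 1) + (1 - beta) * z = z * (1 + U) by rewrite /U; field.
have -> : z / (z * (1 + U)) = (1 + U)^-1 by field; rewrite gt_eqF.
rewrite /Rpower -RinvE ln_Rinv; last exact/RltP.
by rewrite !RmultE RoppE mulrN mulNr.
Qed.

Lemma approx_Bstar_gf0 (t beta : R) n :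
  approx (Bstar_gf t beta 0)
    (binom_poly (- t) n \Po (beta *: (exprel_poly (n + n) - 1))) n.
Proof.
set L := (n + n)%N.
pose U z := beta * ((exp z - 1) / z - 1).
have AU : approx U (beta *: (exprel_poly L - 1)) n.
  apply: approx_le (leq_addr n n) _.
  have := approx_mul (approx_const L beta) (approx_add (approx_exprel L) (approx_const L (-1))).
  by rewrite mul_polyC polyCN polyC1.
have q0 : (beta *: (exprel_poly L - 1))`_0 = 0.
  by rewrite coefZ coefB coef1 coef_poly /= invr1 subrr mulr0.
have [K [K0 HK]] := Rpower_add1_taylor n (- t).
have A := approx_comp_taylor (_ : 0 < 1/2) K0 HK AU q0.
have [L' [rho [L'0 rho0 HL]]] := approx_bigO_z AU q0.
have r1 : 0 < (2 * (L' + 1))^-1 by rewrite invr_gt0; lra.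
have [e [e0 he1 he2]] := pos_below2 rho0 r1.
apply: (approx_eq_near e0 (A ltac:(lra))) => z z0 ze.
have hU : `|U z| <= L' * `|z| by apply: HL => //; exact: lt_le_trans ze he1.
have zsmall : `|z| * (2 * (L' + 1)) < 1.
  by rewrite -ltr_pdivlMr ?div1r; [exact: lt_le_trans ze he2 | lra].
have U2 : `|U z| < 1/2 by nra.
by rewrite Bstar_gf0E ?(add1r_gt0 U2) // -normr_gt0.
Qed.

Close Scope ring_scope.
Unset Implicit Arguments.
Open Scope R_scope.

Theorem corollary4p4 (t beta : R) (hb0 : 0 <= beta) (hb1 : beta <= 1)
  (b : nat -> R -> R) (hb : is_Bstar t beta b) :
  forall n : nat, b n 0 = Bstar0_formula t beta n.
Proof.
intro n.
have coef_n := approx_unique (approx_is_Bstar n hb) (approx_Bstar_gf0 t beta n)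
                 (leqnn n).
rewrite coef_poly ltnSn coef_binom_poly_comp ?leqnSn // in coef_n.
rewrite Bstar0_formulaE -coef_n.
by field; apply: natr_fact_neq0.
Qed.
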